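(* Let $L$ be a number field, $\Gamma$ an order of $L$, $K\subseteq L$ a subfield with ring of integers $\mathcal O_K$ and $n=[L:K]$, $R=\mathrm M_n(\mathcal O_K)$, and $\varphi:K\to L$ a ring morphism. Then there is a bijection $\operatorname{Hom}_\varphi(\Gamma,R)/R^\times\cong J_\varphi$.
   Context: $L$ is a $K$-algebra via $\varphi$; a ring morphism $\rho:\Gamma\to R$ is $\varphi$-compatible if $\rho\otimes\mathbb Q:L\to\mathrm M_n(K)$ is a morphism of $K$-algebras; $\operatorname{Hom}_\varphi(\Gamma,R)$ is the set of such $\rho$, on which $R^\times$ acts by conjugation. Fix a positive integer $z$ with $\varphi(z\mathcal O_K)\subseteq\Gamma$ and let $\mathcal O'=\mathbb Z[z\mathcal O_K]\subseteq\mathcal O_K$; then $\varphi$ restricts to a ring morphism $\mathcal O'\to\Gamma$, giving each $\Gamma$-module $X$ an $\mathcal O'$-module structure $X|_{\mathcal O'}$. Let $\mathcal O_K^n|_{\mathcal O'}$ be $\mathcal O_K^n$ with the $\mathcal O'$-action by (diagonal) multiplication through $\mathcal O'\subseteq\mathcal O_K$. $J_\varphi$ is the set of isomorphism classes of $\Gamma$-modules $X$ with $X|_{\mathcal O'}\cong\mathcal O_K^n|_{\mathcal O'}$ as $\mathcal O'$-modules (this set does not depend on the choice of $z$). *)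

From HB Require Import structures.
From mathcomp Require Import all_boot all_order all_algebra all_field.
Set Implicit Arguments. Unset Strict Implicit. Unset Printing Implicit Defensive.
Import Order.TTheory GRing.Theory Num.Theory.
Local Open Scope ring_scope.

Definition intgr (F : fieldType) (x : F) : Prop :=
  integralOver (fun k : int => k%:~R : F) x.

Definition is_order (L : fieldExtType rat) (G : pred L) : Prop :=
  [/\ 1 \in G,
      (forall x y, x \in G -> y \in G -> x - y \in G),
      (forall x y, x \in G -> y \in G -> x * y \in G) &
      exists b : seq L, basis_of fullv b /\
        forall x, x \in G <-> exists c : 'I_(size b) -> int,
                    x = \sum_(i < size b) ((c i)%:~R : rat) *: b`_i ].

(* The ring O' = Z[z O_K] generated by z times the ring of integers of F. *)
Inductive in_Zadj (F : fieldType) (z : nat) : F -> Prop :=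
  | Zadj1 : in_Zadj z 1
  | Zadj_gen a : intgr a -> in_Zadj z (z%:R * a)
  | ZadjB a b : in_Zadj z a -> in_Zadj z b -> in_Zadj z (a - b)
  | ZadjM a b : in_Zadj z a -> in_Zadj z b -> in_Zadj z (a * b).

Section Hom.
Variables (L : fieldExtType rat) (K : {subfield L}).
Local Notation KK := (subvs_of K).

(* phi-compatible ring morphisms Gamma -> M_n(O_K); rho is given as a function
   on L, only its values on Gamma matter. *)
Definition HomPhi (G : pred L) (phi : {rmorphism KK -> L}) (n : nat)
    (rho : L -> 'M[KK]_n) : Prop :=
  [/\ rho 1 = 1%:M,
      (forall x y, x \in G -> y \in G -> rho (x + y) = rho x + rho y),
      (forall x y, x \in G -> y \in G -> rho (x * y) = rho x *m rho y),
      (forall x i j, x \in G -> intgr (rho x i j)) &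
      (* rho (x) Q : L = Gamma (x) Q -> M_n(K) is K-linear (L a K-algebra via phi) *)
      exists f : L -> 'M[KK]_n,
        (forall x m, (0 < m)%N -> x *+ m \in G -> f x *+ m = rho (x *+ m)) /\
        (forall (a : KK) x, f (phi a * x) = a *: f x) ].

Definition conjR (G : pred L) (n : nat) (rho rho' : L -> 'M[KK]_n) : Prop :=
  exists U V : 'M[KK]_n,
    [/\ forall i j, intgr (U i j), forall i j, intgr (V i j),
        U *m V = 1%:M, V *m U = 1%:M &
        forall x, x \in G -> rho' x = V *m rho x *m U].
End Hom.

(* A candidate Gamma-module: an abelian group with an action of L
   (only elements of Gamma are required to act). *)
Record gmod (L : fieldExtType rat) := GMod {
  gcar : zmodType;
  gact : L -> gcar -> gcar }.

Definition is_gmod (L : fieldExtType rat) (G : pred L) (X : gmod L) : Prop :=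
  [/\ forall x u v, x \in G -> @gact _ X x (u + v) = @gact _ X x u + @gact _ X x v,
      forall x y u, x \in G -> y \in G -> @gact _ X (x + y) u = @gact _ X x u + @gact _ X y u,
      forall x y u, x \in G -> y \in G -> @gact _ X (x * y) u = @gact _ X x (@gact _ X y u) &
      forall u, @gact _ X 1 u = u ].

Definition gmod_iso (L : fieldExtType rat) (G : pred L) (X Y : gmod L) : Prop :=
  exists f : @gcar _ X -> @gcar _ Y,
    [/\ forall u v, f (u + v) = f u + f v, bijective f &
        forall x u, x \in G -> f (@gact _ X x u) = @gact _ Y x (f u)].

(* X|_{O'} is isomorphic to O_K^n|_{O'} (diagonal multiplication). *)
Definition inJ (L : fieldExtType rat) (K : {subfield L})
    (phi : {rmorphism subvs_of K -> L}) (n z : nat) (X : gmod L) : Prop :=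
  exists g : @gcar _ X -> 'rV[subvs_of K]_n,
    [/\ forall u v, g (u + v) = g u + g v,
        injective g,
        forall u i, intgr (g u 0 i),
        forall w : 'rV[subvs_of K]_n, (forall i, intgr (w 0 i)) -> exists u, g u = w &
        forall c u, in_Zadj z c -> g (@gact _ X (phi c) u) = c *: g u].

(* For a phi-compatible rho, the Gamma-module attached to rho is O_K^n, on which
   x acts by right multiplication by rho(x); compatibility forces rho(phi c) = c
   for c in O' = Z[z O_K], so its restriction to O' is O_K^n.  Conversely, if
   X|O' is isomorphic to O_K^n, each x in Gamma acts by an additive map that
   commutes with z O_K; dividing by z shows that such a map is O_K-linear, hence
   right multiplication by a matrix rho(x) over O_K.  The same argument turns an
   isomorphism between the modules of rho and rho' into a matrix in GL_n(O_K)
   conjugating rho into rho'.  The compatibility of the rho built from X is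
   checked on multiples: every element of L has a positive integer multiple in
   Gamma, and every element of K one in O_K. *)

From HB Require Import structures.
From mathcomp Require Import all_boot all_order all_algebra all_field.
From mathcomp Require Import ring.
From Stdlib Require Import ClassicalEpsilon.
Import GRing.Theory Num.Theory.
Local Open Scope ring_scope.

Set Implicit Arguments.
Unset Strict Implicit.

Section Integral.
Variable F : fieldType.
Implicit Types x y : F.

Lemma intgr_nat k : intgr (k%:R : F). Proof. exact: (@integral_nat int F intr). Qed.
Lemma intgr_opp x : intgr x -> intgr (- x). Proof. exact: (@integral_opp int F intr). Qed.
Lemma intgr_sub x y : intgr x -> intgr y -> intgr (x - y).
Proof. exact: (@integral_sub int F intr). Qed.
Lemma intgr_add x y : intgr x -> intgr y -> intgr (x + y).
Proof. exact: (@integral_add int F intr). Qed.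
Lemma intgr_mul x y : intgr x -> intgr y -> intgr (x * y).
Proof. exact: (@integral_mul int F intr). Qed.

Lemma intgr_mulmx m k p (A : 'M[F]_(m, k)) (B : 'M[F]_(k, p)) :
  (forall i j, intgr (A i j)) -> (forall i j, intgr (B i j)) ->
  forall i j, intgr ((A *m B) i j).
Proof.
move=> intA intB i j; rewrite mxE; elim/big_rec: _ => [|l y _ inty].
  exact: (intgr_nat 0).
by apply: intgr_add => //; apply: intgr_mul.
Qed.

(* If [q] has degree [k + 1] and leading coefficient [l], then [l a] is a root
   of the monic integer polynomial [l^k q(X / l)], which is [r] below. *)
Lemma intgr_lead_coef_mul (q : {poly int}) (a : F) :
  root (map_poly intr q) a -> intgr ((lead_coef q)%:~R * a).
Proof.
move=> qa0; set l := lead_coef q; have [/size1_polyC Dq | ] := leqP (size q) 1.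
  move: qa0; rewrite /l Dq map_polyC rootC lead_coefC => /eqP->.
  by rewrite mul0r; apply: (intgr_nat 0).
case Dk : (size q) => [|[|k]] // _.
pose r := \poly_(i < k.+2) (if i == k.+1 then 1 else q`_i * l ^+ (k - i)).
exists r; first by rewrite monicE lead_coef_poly ?eqxx.
have map_size (p : {poly int}) : (size (map_poly intr p : {poly F}) <= size p)%N.
  exact: size_poly.
rewrite rootE (@horner_coef_wide _ k.+2); last first.
  by rewrite (leq_trans (map_size r)) ?size_poly.
have {}qa0 : \sum_(i < k.+2) (q`_i)%:~R * a ^+ i = 0.
  rewrite -[RHS](rootP qa0) (@horner_coef_wide _ k.+2) -?Dk ?map_size //.
  by apply: eq_bigr => i _; rewrite coef_map.
apply/eqP.
rewrite -[RHS](mulr0 ((l%:~R : F) ^+ k)) -[in RHS]qa0 mulr_sumr.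
apply: eq_bigr => i _; rewrite coef_map_id0 ?mulr0z // coef_poly ltn_ord.
case: eqP => [-> | /eqP neq_ik].
  by rewrite /l lead_coefE Dk mul1r exprMn !exprS; ring.
have le_ik : (i <= k)%N by rewrite -ltnS ltn_neqAle neq_ik -ltnS ltn_ord.
have -> : (l%:~R : F) ^+ k = l%:~R ^+ (k - i) * l%:~R ^+ i by rewrite -exprD subnK.
by rewrite intrM rmorphXn /= exprMn; ring.
Qed.

End Integral.

Lemma natr_ext_eq0 (F : fieldExtType rat) k : (k%:R == 0 :> F) = (k == 0)%N.
Proof. by rewrite -(rmorph_nat (in_alg F)) fmorph_eq0 pnatr_eq0. Qed.

Lemma intgr_natmul_exists (F : fieldExtType rat) (a : F) :
  exists2 d : nat, (0 < d)%N & intgr (d%:R * a).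
Proof.
have /polyOver1P[p Dp] := minPolyOver 1 a.
have [q [c c_neq0 Dq]] := rat_poly_scale p.
have qa0 : root (map_poly intr q) a.
  have := root_minPoly 1 a; rewrite Dp Dq map_polyZ rootZ ?fmorph_eq0 ?invr_eq0 ?intr_eq0 //.
  by rewrite -map_poly_comp (eq_map_poly (fun k => scaler_int k 1)).
have q_neq0 : q != 0.
  apply: contraTneq (monic_neq0 (monic_minPoly 1 a)) => q0.
  by rewrite negbK Dp Dq q0 map_poly0 scaler0 map_poly0.
have := intgr_lead_coef_mul qa0; have := q_neq0; rewrite -lead_coef_eq0.
case: (lead_coef q) => m m_neq0; first by exists m; rewrite // lt0n.
by rewrite NegzE mulrNz mulNr => /intgr_opp; rewrite opprK; exists m.+1.
Qed.

Lemma rat_common_den k (r : 'I_k -> rat) :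
  exists2 D : nat, (0 < D)%N & forall i, exists e : int, r i * D%:R = e%:~R.
Proof.
pose d i := `|denq (r i)|%N.
have Dd i : (d i)%:R = (denq (r i))%:~R :> rat by rewrite /d; case: (denqP (r i)) => ? ->.
have d_gt0 i : (0 < d i)%N by rewrite /d; case: (denqP (r i)) => ? ->.
exists (\prod_i d i) => [|i]; first by rewrite prodn_gt0.
exists (numq (r i) * (\prod_(j | j != i) d j)%:R).
by rewrite (bigD1 i) //= natrM Dd mulrA -numqE intrM natz.
Qed.

Lemma order_natmul_mem (L : fieldExtType rat) (G : pred L) :
  is_order G -> forall x, exists m : nat, (0 < m)%N && (x *+ m \in G).
Proof.
case=> _ _ _ [b [b_basis memG]] x.
have Dx := coord_basis (X := in_tuple b) b_basis (memvf x).
have [D D_gt0 /fin_all_exists[e De]] := rat_common_den (fun i => coord (in_tuple b) i x).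
exists D; rewrite D_gt0; apply/memG; exists e.
rewrite -scaler_nat {1}Dx scaler_sumr; apply: eq_bigr => i _.
by rewrite scalerA mulrC De.
Qed.

Section IntegralRows.
Variables (F : fieldType) (n : nat).

Definition integral_row : {pred 'rV[F]_n} :=
  fun w => if excluded_middle_informative (forall i, intgr (w 0 i)) then true else false.

Lemma integral_rowP (w : 'rV[F]_n) :
  reflect (forall i, intgr (w 0 i)) (w \in integral_row).
Proof. by rewrite unfold_in /integral_row; case: excluded_middle_informative; constructor. Qed.

Fact integral_row_zmod_closed : zmod_closed integral_row.
Proof.
split=> [|u v /integral_rowP int_u /integral_rowP int_v].
  by apply/integral_rowP => i; rewrite mxE; apply: (intgr_nat _ 0).
by apply/integral_rowP => i; rewrite !mxE; apply: intgr_sub.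
Qed.
HB.instance Definition _ :=
  GRing.isZmodClosed.Build _ integral_row integral_row_zmod_closed.

Record introw := IntRow { introw_val :> 'rV[F]_n; _ : introw_val \in integral_row }.
HB.instance Definition _ := [isSub for introw_val].
HB.instance Definition _ := [Choice of introw by <:].
HB.instance Definition _ := [SubChoice_isSubZmodule of introw by <:].

Lemma introw_intgr (w : introw) i : intgr (w 0 i).
Proof. exact/integral_rowP/valP. Qed.

Lemma introw_val_inj : injective introw_val.
Proof. exact: val_inj. Qed.

Lemma introw_valD : {morph introw_val : u v / u + v}.
Proof. by []. Qed.

Lemma integral_row_delta i : 'e_i \in integral_row.
Proof. by apply/integral_rowP => j; rewrite mxE; apply: intgr_nat. Qed.

Lemma integral_row_mulmx (w : 'rV[F]_n) (A : 'M[F]_n) :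
  w \in integral_row -> (forall i j, intgr (A i j)) -> w *m A \in integral_row.
Proof.
move=> /integral_rowP int_w int_A; apply/integral_rowP.
by apply: intgr_mulmx => // i; rewrite ord1.
Qed.

End IntegralRows.
Arguments integral_row {F n}.
Arguments introw_val {F n}.
Arguments introw_val_inj {F n}.
Arguments introw_valD {F n}.
Arguments introw_intgr {F n}.

Lemma delta_mulmx_inj (R : pzSemiRingType) m p (A B : 'M[R]_(m, p)) :
  (forall i, ('e_i : 'rV_m) *m A = 'e_i *m B) -> A = B.
Proof. by move=> eqAB; apply/row_matrixP => i; rewrite !rowE. Qed.

Section Cancel2.
Variables (A B : Type) (f : A -> B) (f' : B -> A).
Hypotheses (fK : cancel f f') (f'K : cancel f' f).

Lemma can2_morph1 (a : A -> A) (b : B -> B) :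
  {morph f : u / a u >-> b u} -> {morph f' : u / b u >-> a u}.
Proof. by move=> fa u; apply: (can_inj fK); rewrite f'K fa f'K. Qed.

Lemma can2_morph2 (a : A -> A -> A) (b : B -> B -> B) :
  {morph f : u v / a u v >-> b u v} -> {morph f' : u v / b u v >-> a u v}.
Proof. by move=> fa u v; apply: (can_inj fK); rewrite fa !f'K. Qed.

End Cancel2.

Section AdditiveMaps.
Variables (U V : zmodType) (f : U -> V).
Hypothesis fD : {morph f : u v / u + v}.

Lemma morph_add0 : f 0 = 0.
Proof. by apply: (addrI (f 0)); rewrite -fD !addr0. Qed.

Lemma morph_add_sum I (r : seq I) (P : pred I) (E : I -> U) :
  f (\sum_(i <- r | P i) E i) = \sum_(i <- r | P i) f (E i).
Proof. exact: (big_morph f fD morph_add0). Qed.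

Lemma morph_add_natmul u k : f (u *+ k) = f u *+ k.
Proof. by elim: k => [|k IHk]; rewrite ?mulr0n ?morph_add0 // !mulrS fD IHk. Qed.

End AdditiveMaps.

Section ZScalableMaps.
Variables (F : fieldType) (n z : nat) (M : zmodType).
Variables (g : M -> 'rV[F]_n) (s : F -> M -> M).

Definition zO_scalable p (h : M -> 'rV[F]_p) :=
  forall a u, intgr a -> h (s (z%:R * a) u) = (z%:R * a) *: h u.

Hypotheses (z_neq0 : z%:R != 0 :> F) (gD : {morph g : u v / u + v}) (g_inj : injective g).
Hypotheses (g_intgr : forall u i, intgr (g u 0 i)) (g_s : zO_scalable g).
Hypothesis g_onto : forall w : 'rV[F]_n, (forall i, intgr (w 0 i)) -> exists u, g u = w.

Lemma zO_scalable_intgr p (h : M -> 'rV[F]_p) :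
  {morph h : u v / u + v} -> zO_scalable h ->
  forall a u v, intgr a -> g v = a *: g u -> h v = a *: h u.
Proof.
move=> hD h_s a u v int_a Dv.
have Dzv : s (z%:R * a) u = v *+ z.
  by apply: g_inj; rewrite g_s // morph_add_natmul // Dv -scalerA scaler_nat.
apply: (scalerI z_neq0).
by rewrite scalerA scaler_nat -morph_add_natmul // -Dzv h_s.
Qed.

Variable e : 'I_n -> M.
Hypothesis g_e : forall i, g (e i) = 'e_i.

(* [g] identifies [M] with [O^n], so an additive map which commutes with
   [z O] is [O]-linear, hence given by its values on the basis [e]. *)
Lemma zO_scalable_mulmx p (h : M -> 'rV[F]_p) :
  {morph h : u v / u + v} -> zO_scalable h ->
  forall u, h u = g u *m \matrix_i h (e i).
Proof.
move=> hD h_s u.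
have /fin_all_exists[v Dv] i : exists v, g v = g u 0 i *: 'e_i.
  by apply: g_onto => j; rewrite !mxE; apply: intgr_mul => //; apply: intgr_nat.
have Du : u = \sum_i v i.
  by apply: g_inj; rewrite morph_add_sum // [LHS]row_sum_delta; apply: eq_bigr.
rewrite mulmx_sum_row {1}Du morph_add_sum //; apply: eq_bigr => i _.
by rewrite rowK (zO_scalable_intgr hD h_s (g_intgr u i) (u := e i)) ?Dv ?g_e.
Qed.

End ZScalableMaps.

Section NatmulExtension.
Variables (V : zmodType) (F : fieldType) (W : lmodType F) (G : pred V) (rho : V -> W).
Hypothesis G_natmul : forall x, exists m : nat, (0 < m)%N && (x *+ m \in G).
Hypothesis rhoMn : forall x k, x \in G -> rho (x *+ k) = rho x *+ k.
Hypothesis natr_neq0 : forall k, (0 < k)%N -> k%:R != 0 :> F.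

Definition natmul_ext x := let m := xchoose (G_natmul x) in m%:R^-1 *: rho (x *+ m).

Lemma natmul_extE x k : (0 < k)%N -> x *+ k \in G -> natmul_ext x *+ k = rho (x *+ k).
Proof.
rewrite /natmul_ext => k_gt0 xkG; have /andP[m_gt0 xmG] := xchooseP (G_natmul x).
set m := xchoose _ in m_gt0 xmG *.
apply: (scalerI (natr_neq0 m_gt0)); rewrite -scalerMnr scalerA mulfV ?natr_neq0 //.
by rewrite scale1r scaler_nat -!rhoMn // -!mulrnA mulnC.
Qed.

End NatmulExtension.

Section Representations.
Variables (L : fieldExtType rat) (K : {subfield L}) (G : pred L).
Variables (phi : {rmorphism subvs_of K -> L}) (n z : nat).
Local Notation KK := (subvs_of K).
Local Notation act X := (@gact _ X).
Hypotheses (G_order : is_order G) (z_gt0 : (0 < z)%N).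
Hypothesis phi_zO : forall a : KK, intgr a -> phi (z%:R * a) \in G.

Lemma order_mem1 : 1 \in G. Proof. by case: G_order. Qed.
Lemma order_memB x y : x \in G -> y \in G -> x - y \in G.
Proof. by case: G_order => _ GB _ _; apply: GB. Qed.
Lemma order_memM x y : x \in G -> y \in G -> x * y \in G.
Proof. by case: G_order => _ _ GM _; apply: GM. Qed.
Lemma order_mem0 : 0 \in G. Proof. by rewrite -(subrr 1) order_memB ?order_mem1. Qed.
Lemma order_memD x y : x \in G -> y \in G -> x + y \in G.
Proof. by move=> Gx Gy; have := order_memB Gx (order_memB order_mem0 Gy); rewrite sub0r opprK. Qed.
Lemma order_memMn x k : x \in G -> x *+ k \in G.
Proof. by move=> Gx; elim: k => [|k IHk]; rewrite ?order_mem0 // mulrS order_memD. Qed.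

Lemma phi_Zadj_mem c : in_Zadj z c -> phi c \in G.
Proof.
elim=> [|a /phi_zO //|a b _ Ga _ Gb|a b _ Ga _ Gb]; first by rewrite rmorph1 order_mem1.
  by rewrite rmorphB order_memB.
by rewrite rmorphM order_memM.
Qed.

Lemma natr_KK_neq0 k : (0 < k)%N -> k%:R != 0 :> KK.
Proof. by rewrite natr_ext_eq0 -lt0n. Qed.

Lemma HomPhi_phi (rho : L -> 'M[KK]_n) c :
  HomPhi G phi rho -> phi c \in G -> rho (phi c) = c%:M.
Proof.
case=> rho1 _ _ _ [f [f_rho f_phi]] Gc.
have f1 : f 1 = 1%:M.
  by have := f_rho 1 1%N isT; rewrite !mulr1n rho1; apply; apply: order_mem1.
have := f_rho (phi c) 1%N isT; rewrite !mulr1n => <- //.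
by rewrite -[phi c]mulr1 f_phi f1 scalemx1.
Qed.

(* The K-linear extension of rho to L is x |-> rho(m x) / m for any m > 0 with
   m x in Gamma; phi(a) acts on it as a because d a lies in O_K for some d > 0. *)
Lemma HomPhi_of_Zadj (rho : L -> 'M[KK]_n) :
  rho 1 = 1%:M ->
  (forall x y, x \in G -> y \in G -> rho (x + y) = rho x + rho y) ->
  (forall x y, x \in G -> y \in G -> rho (x * y) = rho x *m rho y) ->
  (forall x i j, x \in G -> intgr (rho x i j)) ->
  (forall c, in_Zadj z c -> rho (phi c) = c%:M) ->
  HomPhi G phi rho.
Proof.
move=> rho1 rhoD rhoM rho_intgr rho_phi; split=> //.
have rhoMn x k : x \in G -> rho (x *+ k) = rho x *+ k.
  move=> Gx; elim: k => [|k IHk]; last by rewrite !mulrS rhoD ?order_memMn ?IHk.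
  by apply: (addrI (rho 0)); rewrite -rhoD ?order_mem0 // !mulr0n !addr0.
have G_natmul := order_natmul_mem G_order.
have f_rho := natmul_extE G_natmul rhoMn natr_KK_neq0.
exists (natmul_ext rho G_natmul); split=> // a x.
have [d d_gt0 int_da] := intgr_natmul_exists a.
have [m /andP[m_gt0 Gxm]] := G_natmul x.
pose c := z%:R * (d%:R * a); pose N := (d * z * m)%N.
have N_gt0 : (0 < N)%N by rewrite !muln_gt0 d_gt0 z_gt0.
have DN : (phi a * x) *+ N = phi c * (x *+ m).
  by rewrite !rmorphM !rmorph_nat mulrnAr !mulr_natl !mulrnAl !mulrnA.
have Zc : in_Zadj z c by apply: Zadj_gen.
have GN : phi a * x *+ N \in G by rewrite DN order_memM ?phi_Zadj_mem.
set f := natmul_ext rho G_natmul.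
apply: (scalerI (natr_KK_neq0 N_gt0)); rewrite scaler_nat f_rho //.
rewrite (_ : rho _ = rho (phi c * (x *+ m))); last by rewrite DN.
rewrite rhoM ?phi_Zadj_mem // rho_phi // mul_scalar_mx -f_rho //.
rewrite -scaler_nat !scalerA; congr (_ *: _).
by rewrite /c /N mulr_natr !mulr_natl !mulrnA.
Qed.

Local Notation OKn := (introw KK n).

(* Locked, as unfolding [insubd] and matrix products makes unification hang.
   The junk value [w] of [insubd w] is never taken for x in Gamma, where rho
   has integral entries. *)
Fact rep_act_key : unit. Proof. by []. Qed.
Definition rep_act (rho : L -> 'M[KK]_n) : L -> OKn -> OKn :=
  locked_with rep_act_key (fun x (w : OKn) => insubd w (introw_val w *m rho x)).
Definition rep_gmod rho : gmod L := GMod (rep_act rho).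

Lemma rep_actE rho x (w : OKn) : HomPhi G phi rho -> x \in G ->
  introw_val (act (rep_gmod rho) x w) = w *m rho x.
Proof.
case=> _ _ _ rho_intgr _ Gx; rewrite /= /rep_act unlock insubdK //.
by apply: integral_row_mulmx (valP w) _ => i j; apply: rho_intgr.
Qed.

Lemma rep_act_phi rho c (w : OKn) : HomPhi G phi rho -> in_Zadj z c ->
  introw_val (act (rep_gmod rho) (phi c) w) = c *: introw_val w.
Proof.
move=> rhoP /phi_Zadj_mem Gc.
by rewrite rep_actE // (HomPhi_phi rhoP Gc) mul_mx_scalar.
Qed.

Lemma rep_gmod_is_gmod rho : HomPhi G phi rho -> is_gmod G (rep_gmod rho).
Proof.
move=> rhoP; have [rho1 rhoD rhoM _ _] := rhoP.
split=> [x u v Gx | x y u Gx Gy | x y u Gx Gy | u]; apply: introw_val_inj.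
- by rewrite introw_valD !rep_actE // introw_valD mulmxDl.
- by rewrite introw_valD !rep_actE ?order_memD // rhoD // mulmxDr.
- by rewrite !rep_actE ?order_memM // mulrC rhoM // mulmxA.
- by rewrite rep_actE ?order_mem1 // rho1 mulmx1.
Qed.

Lemma rep_gmod_inJ rho : HomPhi G phi rho -> inJ phi n z (rep_gmod rho).
Proof.
move=> rhoP; exists introw_val; split.
- exact: introw_valD.
- exact: introw_val_inj.
- exact: introw_intgr.
- by move=> w /integral_rowP int_w; exists (IntRow int_w).
- by move=> c u; apply: rep_act_phi.
Qed.

Definition introw_delta (i : 'I_n) : OKn := IntRow (integral_row_delta KK i).

Definition intertwines rho rho' (T : OKn -> OKn) :=
  forall x u, x \in G -> T (act (rep_gmod rho) x u) = act (rep_gmod rho') x (T u).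

Lemma intertwines_mulmx rho rho' (T : OKn -> OKn) :
  HomPhi G phi rho -> HomPhi G phi rho' ->
  {morph T : u v / u + v} -> intertwines rho rho' T ->
  forall u, introw_val (T u) = introw_val u *m \matrix_i introw_val (T (introw_delta i)).
Proof.
move=> rhoP rho'P TD T_act.
pose s c u : OKn := act (rep_gmod rho) (phi c) u.
have val_s : zO_scalable z s introw_val.
  by move=> a u int_a; rewrite rep_act_phi //; apply: Zadj_gen.
have val_onto (w : 'rV[KK]_n) : (forall i, intgr (w 0 i)) -> exists u : OKn, introw_val u = w.
  by move=> /integral_rowP int_w; exists (IntRow int_w).
apply: (zO_scalable_mulmx (natr_KK_neq0 z_gt0) introw_valD introw_val_inj
          introw_intgr val_s val_onto (e := introw_delta) (fun i => erefl)
          (h := fun u => introw_val (T u))).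
- by move=> u v; rewrite TD.
- move=> a u int_a; have Zza : in_Zadj z (z%:R * a) by apply: Zadj_gen.
  by rewrite /s T_act ?phi_Zadj_mem // rep_act_phi.
Qed.

Lemma conjR_of_iso rho rho' : HomPhi G phi rho -> HomPhi G phi rho' ->
  gmod_iso G (rep_gmod rho) (rep_gmod rho') -> conjR G rho rho'.
Proof.
move=> rhoP rho'P [T [TD [T' TK T'K] T_act]].
have T'D : {morph T' : u v / u + v} := can2_morph2 TK T'K TD.
have T'_act : intertwines rho' rho T'.
  by move=> x u Gx; apply: (can2_morph1 TK T'K) => w; apply: T_act.
have DU := intertwines_mulmx rhoP rho'P TD T_act.
have DV := intertwines_mulmx rho'P rhoP T'D T'_act.
set U := \matrix_i _ in DU; set V := \matrix_i _ in DV.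
have deltaE i : 'e_i = introw_val (introw_delta i) by [].
have UV : U *m V = 1%:M.
  by apply: delta_mulmx_inj => i; rewrite mulmxA deltaE -DU -DV (TK (introw_delta i)) mulmx1.
have VU : V *m U = 1%:M.
  by apply: delta_mulmx_inj => i; rewrite mulmxA deltaE -DV -DU (T'K (introw_delta i)) mulmx1.
have UP x : x \in G -> rho x *m U = U *m rho' x.
  move=> Gx; apply: delta_mulmx_inj => i; rewrite !mulmxA deltaE.
  by rewrite -(rep_actE _ rhoP Gx) -DU (T_act x _ Gx) rep_actE // DU.
exists U, V; split=> // [i j | i j | x Gx].
- by rewrite mxE; apply: introw_intgr.
- by rewrite mxE; apply: introw_intgr.
by rewrite -mulmxA UP // mulmxA VU mul1mx.
Qed.

Lemma iso_of_conjR rho rho' : HomPhi G phi rho -> HomPhi G phi rho' ->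
  conjR G rho rho' -> gmod_iso G (rep_gmod rho) (rep_gmod rho').
Proof.
move=> rhoP rho'P [U [V [U_intgr V_intgr UV VU conjU]]].
pose T (w : OKn) : OKn := IntRow (integral_row_mulmx (valP w) U_intgr).
pose T' (w : OKn) : OKn := IntRow (integral_row_mulmx (valP w) V_intgr).
exists T; split=> [u v | | x u Gx].
- by apply: introw_val_inj; rewrite /= mulmxDl.
- by exists T' => w; apply: introw_val_inj; rewrite /= -mulmxA ?UV ?VU mulmx1.
apply: introw_val_inj; rewrite /= !rep_actE // conjU // !mulmxA.
by rewrite -[_ *m U *m V]mulmxA UV mulmx1.
Qed.

Section ModuleCoordinates.
Variables (X : gmod L) (g : gcar X -> 'rV[KK]_n) (e : 'I_n -> gcar X).
Hypothesis X_gmod : is_gmod G X.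
Hypotheses (gD : {morph g : u v / u + v}) (g_inj : injective g).
Hypotheses (g_intgr : forall u i, intgr (g u 0 i)).
Hypothesis g_onto : forall w : 'rV[KK]_n, (forall i, intgr (w 0 i)) -> exists u, g u = w.
Hypothesis g_Zadj : forall c u, in_Zadj z c -> g (act X (phi c) u) = c *: g u.
Hypothesis g_e : forall i, g (e i) = 'e_i.

Definition coord_rep x : 'M[KK]_n := \matrix_i g (act X x (e i)).

Lemma coord_repE x u : x \in G -> g (act X x u) = g u *m coord_rep x.
Proof.
have [actD _ actM _] := X_gmod; move=> Gx.
pose s c u := act X (phi c) u.
have g_s : zO_scalable z s g by move=> a v int_a; apply/g_Zadj/Zadj_gen.
apply: (zO_scalable_mulmx (natr_KK_neq0 z_gt0) gD g_inj g_intgr g_s g_onto g_e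
          (h := fun u => g (act X x u))) => [v w | a v int_a].
  by rewrite actD ?gD.
by rewrite /s -actM ?phi_zO // mulrC actM ?phi_zO // g_s.
Qed.

Lemma coord_rep_delta x i : 'e_i *m coord_rep x = g (act X x (e i)).
Proof. by rewrite -rowE rowK. Qed.

Lemma coord_rep_HomPhi : HomPhi G phi coord_rep.
Proof.
have [_ actDl actM act1] := X_gmod.
apply: HomPhi_of_Zadj => [| x y Gx Gy | x y Gx Gy | x i j _ | c Zc].
- by apply: delta_mulmx_inj => i; rewrite coord_rep_delta act1 g_e mulmx1.
- by apply: delta_mulmx_inj => i; rewrite mulmxDr !coord_rep_delta actDl ?gD.
- apply: delta_mulmx_inj => i.
  by rewrite mulmxA !coord_rep_delta -coord_repE // -actM // mulrC.
- by rewrite mxE; apply: g_intgr.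
- by apply: delta_mulmx_inj => i; rewrite coord_rep_delta g_Zadj // g_e mul_mx_scalar.
Qed.

Lemma coord_rep_iso : gmod_iso G X (rep_gmod coord_rep).
Proof.
have g_row u : g u \in integral_row by apply/integral_rowP/g_intgr.
have g_onto' (w : OKn) : exists u, g u == introw_val w.
  by have [u <-] := g_onto (introw_intgr w); exists u.
pose g' (w : OKn) := xchoose (g_onto' w).
have g'K w : g (g' w) = introw_val w by apply/eqP/(xchooseP (g_onto' w)).
exists (fun u => IntRow (g_row u)) => /=; split=> [u v | | x u Gx].
- by apply: introw_val_inj; rewrite /= gD.
- by exists g' => [u | w]; [apply: g_inj | apply: introw_val_inj]; rewrite /= g'K.
apply: introw_val_inj; rewrite (rep_actE _ coord_rep_HomPhi Gx) /=.
exact: coord_repE.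
Qed.

End ModuleCoordinates.

Lemma inJ_rep (X : gmod L) : is_gmod G X -> inJ phi n z X ->
  exists rho, HomPhi G phi rho /\ gmod_iso G X (rep_gmod rho).
Proof.
move=> X_gmod [g [gD g_inj g_intgr g_onto g_Zadj]].
have /fin_all_exists[e g_e] i : exists u, g u = 'e_i.
  by apply: g_onto => j; rewrite mxE; apply: intgr_nat.
exists (coord_rep g e); split.
  exact: coord_rep_HomPhi.
exact: coord_rep_iso.
Qed.

End Representations.

Unset Implicit Arguments.

Theorem proposition10p5 (L : fieldExtType rat) (K : {subfield L}) (G : pred L)
    (phi : {rmorphism subvs_of K -> L}) (n z : nat) :
  is_order G ->
  n = (\dim {:L} %/ \dim K)%N ->
  (0 < z)%N ->
  (forall a : subvs_of K, intgr a -> phi (z%:R * a) \in G) ->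
  exists F : (L -> 'M[subvs_of K]_n) -> gmod L,
    [/\ forall rho, HomPhi G phi rho -> is_gmod G (F rho) /\ inJ phi n z (F rho),
        forall rho rho', HomPhi G phi rho -> HomPhi G phi rho' ->
          (gmod_iso G (F rho) (F rho') <-> conjR G rho rho') &
        forall X : gmod L, is_gmod G X -> inJ phi n z X ->
          exists rho, HomPhi G phi rho /\ gmod_iso G X (F rho)].
Proof.
move=> G_order _ z_gt0 phi_zO; exists (@rep_gmod L K n); split.
- move=> rho rhoP; split; first exact: (rep_gmod_is_gmod G_order rhoP).
  exact: (rep_gmod_inJ G_order phi_zO rhoP).
- move=> rho rho' rhoP rho'P; split; first exact: (conjR_of_iso G_order z_gt0 phi_zO rhoP rho'P).
  exact: (iso_of_conjR rhoP rho'P).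
- exact: (inJ_rep G_order z_gt0 phi_zO).
Qed.
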